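(* Let $n\ge1$ and let $\mathcal T\in\mathbf{Rel}^n\mathbf{Cat}$ be such that its ambient category $a\mathcal T$ is a poset with a terminal object. Then for every $X\in\mathrm{s}^n\mathcal S$ the canonical map $$\operatorname{colim}_{\Delta X}\operatorname{map}(\mathcal T,\Delta_{\mathrm{rel}}F)\to\operatorname{map}(\mathcal T,\Delta_{\mathrm{rel}}X)$$ is an isomorphism (bijection of sets).
   Context: An $n$-relative category $\mathcal C=(a\mathcal C,v_1\mathcal C,\dots,v_n\mathcal C,w\mathcal C)$ consists of a category $a\mathcal C$ and subcategories $v_1\mathcal C,\dots,v_n\mathcal C,w\mathcal C\subset a\mathcal C$, each containing all objects, with $w\mathcal C\subset v_i\mathcal C$ for all $i$, such that every map of $a\mathcal C$ is a finite composite of maps in the $v_i\mathcal C$, and every relation in $a\mathcal C$ follows from commutativity of squares $y_2x_1=x_2y_1$ with $x_1,x_2\in v_i\mathcal C$, $y_1,y_2\in v_j\mathcal C$. $\mathbf{Rel}^n\mathbf{Cat}$ is the category of small $n$-relative categories and functors of ambient categories preserving $w$ and each $v_i$; $\operatorname{map}(\mathcal C,\mathcal D)$ denotes the set of maps $\mathcal C\to\mathcal D$ in $\mathbf{Rel}^n\mathbf{Cat}$. $\mathrm{s}^n\mathcal S$ is the category of $(n+1)$-simplicial sets with standard multisimplices $\Delta[p_n,\dots,p_1,q]$; $\Delta[-]$ is their full subcategory (maps = tuples of order-preserving maps $\mathbf p_i\to\mathbf p_i'$, $\mathbf q\to\mathbf q'$, where $\mathbf p$ is the poset $0\to\cdots\to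 p$). $\Delta X=\Delta[-]\downarrow X$, and $F\colon\Delta X\to\mathrm{s}^n\mathcal S$ sends $\Delta[p_n,\dots,p_1,q]\to X$ to $\Delta[p_n,\dots,p_1,q]$. $\Delta_{\mathrm{rel}}[-]$ is the $n$-relative category with ambient category $\Delta[-]$, $v_i$ the maps whose component $\mathbf p_i\to\mathbf p_i'$ sends $p_i$ to $p_i'$, and $w=\bigcap_iv_i$. For $Y\in\mathrm{s}^n\mathcal S$, $\Delta_{\mathrm{rel}}Y=\Delta_{\mathrm{rel}}[-]\downarrow Y$ is the $n$-relative over category (ambient category $\Delta[-]\downarrow Y$; a map lies in $v_i$ or $w$ iff its underlying map in $\Delta[-]$ does), functorial in $Y$. *)

From HB Require Import structures.
From mathcomp Require Import all_boot.
From Stdlib Require Import ProofIrrelevance Relation_Operators.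

Set Implicit Arguments.
Unset Strict Implicit.
Unset Printing Implicit Defensive.

(* A multi-index (p_n,...,p_1,q) is an (n+1)-tuple d; coordinate ord0 is q,
   coordinate (lift ord0 i) for i : 'I_n is p_(i+1).  The poset p is 'I_p.+1. *)
Definition mdim (n : nat) := n.+1.-tuple nat.

Definition dhom n (d d' : mdim n) :=
  { f : forall k : 'I_n.+1, 'I_(tnth d k).+1 -> 'I_(tnth d' k).+1 |
    forall k (i j : 'I_(tnth d k).+1), (i <= j)%N -> (f k i <= f k j)%N }.

Definition did n (d : mdim n) : dhom d d :=
  @exist _ (fun f : forall k : 'I_n.+1, 'I_(tnth d k).+1 -> 'I_(tnth d k).+1 =>
    forall k (i j : 'I_(tnth d k).+1), (i <= j)%N -> (f k i <= f k j)%N)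
    (fun k i => i) (fun k i j h => h).

Definition dcomp n (d d' d'' : mdim n) (g : dhom d' d'') (f : dhom d d')
  : dhom d d'' :=
  @exist _ (fun f : forall k : 'I_n.+1, 'I_(tnth d k).+1 -> 'I_(tnth d'' k).+1 =>
    forall k (i j : 'I_(tnth d k).+1), (i <= j)%N -> (f k i <= f k j)%N)
          (fun k i => proj1_sig g k (proj1_sig f k i))
          (fun k i j h => proj2_sig g k _ _ (proj2_sig f k i j h)).

Lemma dhom_eq n (d d' : mdim n) (f1 f2 : dhom d d') :
  proj1_sig f1 = proj1_sig f2 -> f1 = f2.
Proof. destruct f1, f2; simpl; intros ->; f_equal; apply proof_irrelevance. Qed.

Record msset n := MSSet {
  cell :> mdim n -> Type;
  act : forall d d' : mdim n, dhom d d' -> cell d' -> cell d;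
  act_id : forall d (x : cell d), act (did d) x = x;
  act_comp : forall d d' d'' (f : dhom d d') (g : dhom d' d'') (x : cell d''),
      act (dcomp g f) x = act f (act g x) }.
Arguments act {n} m {d d'} f x.
Arguments act_id {n} m {d} x.
Arguments act_comp {n} m {d d' d''} f g x.

Record msmap n (X Y : msset n) := MSMap {
  mscomp :> forall d, X d -> Y d;
  msnat : forall d d' (f : dhom d d') (y : X d'),
      mscomp (act X f y) = act Y f (mscomp y) }.

Lemma simp_act_id n (d0 : mdim n) d (x : dhom d d0) : dcomp x (did d) = x.
Proof. by apply: dhom_eq. Qed.
Lemma simp_act_comp n (d0 : mdim n) d d' d'' (f : dhom d d') (g : dhom d' d'')
  (x : dhom d'' d0) : dcomp x (dcomp g f) = dcomp (dcomp x g) f.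
Proof. by apply: dhom_eq. Qed.

Definition simp n (d0 : mdim n) : msset n :=
  @MSSet n (fun d => dhom d d0) (fun d d' f g => dcomp g f)
    (@simp_act_id n d0) (@simp_act_comp n d0).

Lemma simp_map_nat n (d d' : mdim n) (f : dhom d d') e e' (h : dhom e e')
  (y : dhom e' d) : dcomp f (dcomp y h) = dcomp (dcomp f y) h.
Proof. by apply: dhom_eq. Qed.
Definition simp_map n (d d' : mdim n) (f : dhom d d') : msmap (simp d) (simp d') :=
  @MSMap n (simp d) (simp d') (fun e g => dcomp f g) (@simp_map_nat n d d' f).

Lemma yoneda_nat n (X : msset n) (d : mdim n) (x : X d) e e' (h : dhom e e')
  (y : dhom e' d) : act X (dcomp y h) x = act X h (act X y x).
Proof. exact: (act_comp X h y x). Qed.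
Definition yoneda n (X : msset n) (d : mdim n) (x : X d) : msmap (simp d) X :=
  @MSMap n (simp d) X (fun e g => act X g x) (@yoneda_nat n X d x).

Definition relobj n (Y : msset n) := { d : mdim n & Y d }.

Definition relhom n (Y : msset n) (o o' : relobj Y) :=
  { f : dhom (projT1 o) (projT1 o') | act Y f (projT2 o') = projT2 o }.

Definition relid n (Y : msset n) (o : relobj Y) : relhom o o :=
  exist _ (did (projT1 o)) (act_id Y (projT2 o)).

Lemma relcomp_proof n (Y : msset n) (o o' o'' : relobj Y)
  (g : relhom o' o'') (f : relhom o o') :
  act Y (dcomp (proj1_sig g) (proj1_sig f)) (projT2 o'') = projT2 o.
Proof. by rewrite act_comp (proj2_sig g) (proj2_sig f). Qed.

Definition relcomp n (Y : msset n) (o o' o'' : relobj Y)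
  (g : relhom o' o'') (f : relhom o o') : relhom o o'' :=
  exist _ (dcomp (proj1_sig g) (proj1_sig f)) (relcomp_proof g f).

Lemma relhom_eq n (Y : msset n) (o o' : relobj Y) (h1 h2 : relhom o o') :
  proj1_sig h1 = proj1_sig h2 -> h1 = h2.
Proof. destruct h1, h2; simpl; intros ->; f_equal; apply proof_irrelevance. Qed.

(* v_i (i : 'I_n, meaning the coordinate p_(i+1)): the component sends the
   last vertex to the last vertex; w = intersection of the v_i *)
Definition dv n (i : 'I_n) (d d' : mdim n) (f : dhom d d') : Prop :=
  proj1_sig f (lift ord0 i) ord_max = ord_max.
Definition dw n (d d' : mdim n) (f : dhom d d') : Prop := forall i, dv i f.

Definition relv n (Y : msset n) (i : 'I_n) (o o' : relobj Y) (h : relhom o o') :=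
  dv i (proj1_sig h).
Definition relw n (Y : msset n) (o o' : relobj Y) (h : relhom o o') :=
  dw (proj1_sig h).

Definition relmapF n (X Y : msset n) (phi : msmap X Y) (o : relobj X) : relobj Y :=
  existT _ (projT1 o) (phi _ (projT2 o)).

Lemma relmapH_proof n (X Y : msset n) (phi : msmap X Y) (o o' : relobj X)
  (h : relhom o o') :
  act Y (proj1_sig h) (projT2 (relmapF phi o')) = projT2 (relmapF phi o).
Proof. by rewrite /= -msnat (proj2_sig h). Qed.

Definition relmapH n (X Y : msset n) (phi : msmap X Y) (o o' : relobj X)
  (h : relhom o o') : relhom (relmapF phi o) (relmapF phi o') :=
  exist _ (proj1_sig h) (relmapH_proof phi h).

Fixpoint vpath n (T : Type) (v : 'I_n -> T -> T -> Prop) (a : T)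
  (s : seq ('I_n * T)) : Prop :=
  match s with
  | [::] => True
  | (i, c) :: r => v i a c /\ vpath v c r
  end.

Definition pcur n (T : Type) (a : T) (s : seq ('I_n * T)) : T := last a (map snd s).

(* elementary relations: an identity step may be removed; two consecutive
   steps in the same v_i compose; a square y2 x1 = x2 y1 with x's in v_i and
   y's in v_j may be swapped *)
Inductive pstep n (T : Type) (a : T) : seq ('I_n * T) -> seq ('I_n * T) -> Prop :=
| pstep_id p r i : pstep a (p ++ (i, pcur a p) :: r) (p ++ r)
| pstep_merge p r i b c : pstep a (p ++ (i, b) :: (i, c) :: r) (p ++ (i, c) :: r)
| pstep_sq p r i j b c d :
    pstep a (p ++ (i, b) :: (j, d) :: r) (p ++ (j, c) :: (i, d) :: r).

Definition prelstep n (T : Type) (v : 'I_n -> T -> T -> Prop) (a : T)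
  (s t : seq ('I_n * T)) : Prop :=
  vpath v a s /\ vpath v a t /\ pstep a s t.

Record nrelposet n := NRelPoset {
  pcar :> Type;
  ple : pcar -> pcar -> Prop;
  ple_refl : forall a, ple a a;
  ple_anti : forall a b, ple a b -> ple b a -> a = b;
  ple_trans : forall a b c, ple a b -> ple b c -> ple a c;
  pv : 'I_n -> pcar -> pcar -> Prop;
  pw : pcar -> pcar -> Prop;
  pv_le : forall i a b, pv i a b -> ple a b;
  pv_refl : forall i a, pv i a a;
  pv_trans : forall i a b c, pv i a b -> pv i b c -> pv i a c;
  pw_le : forall a b, pw a b -> ple a b;
  pw_refl : forall a, pw a a;
  pw_trans : forall a b c, pw a b -> pw b c -> pw a c;
  pw_v : forall i a b, pw a b -> pv i a b;
  (* every map is a finite composite of maps in the v_i *)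
  pgen : forall a b, ple a b -> exists s, vpath pv a s /\ pcur a s = b;
  (* every relation follows from commutativity of squares *)
  prel : forall a s t, vpath pv a s -> vpath pv a t -> pcur a s = pcur a t ->
      clos_refl_sym_trans _ (prelstep pv a) s t }.

Record relfun n (T : nrelposet n) (Y : msset n) := RelFun {
  fob : T -> relobj Y;
  fmor : forall a b : T, ple a b -> relhom (fob a) (fob b);
  fmor_id : forall (a : T) (h : ple a a), fmor h = relid (fob a);
  fmor_comp : forall (a b c : T) (h1 : ple a b) (h2 : ple b c) (h3 : ple a c),
      fmor h3 = relcomp (fmor h2) (fmor h1);
  fmor_v : forall i (a b : T) (h : ple a b), pv i a b -> relv i (fmor h);
  fmor_w : forall (a b : T) (h : ple a b), pw a b -> relw (fmor h) }.

Section Post.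
Variables (n : nat) (T : nrelposet n) (X Y : msset n) (phi : msmap X Y)
  (g : relfun T X).
Lemma post_id (a : T) (h : ple a a) :
  relmapH phi (fmor g h) = relid (relmapF phi (fob g a)).
Proof. by apply: relhom_eq; rewrite /= (fmor_id g h). Qed.
Lemma post_comp (a b c : T) (h1 : ple a b) (h2 : ple b c) (h3 : ple a c) :
  relmapH phi (fmor g h3) = relcomp (relmapH phi (fmor g h2)) (relmapH phi (fmor g h1)).
Proof. by apply: relhom_eq; rewrite /= (fmor_comp g h1 h2 h3). Qed.
Lemma post_v i (a b : T) (h : ple a b) : pv i a b -> relv i (relmapH phi (fmor g h)).
Proof. exact: fmor_v. Qed.
Lemma post_w (a b : T) (h : ple a b) : pw a b -> relw (relmapH phi (fmor g h)).
Proof. exact: fmor_w. Qed.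
Definition relfun_post : relfun T Y :=
  @RelFun n T Y (fun a => relmapF phi (fob g a))
    (fun a b h => relmapH phi (fmor g h)) post_id post_comp post_v post_w.
End Post.

(* objects of Delta X = Delta[-] | X are identified (Yoneda) with pairs (d, x),
   x in X_d; F(d, x) = Delta[d]. *)
Definition colim_el n (T : nrelposet n) (X : msset n) :=
  { s : relobj X & relfun T (simp (projT1 s)) }.

(* generating relation: (sigma, G(f) g) ~ (sigma', g)... written as
   (sigma, g) ~ (sigma', map(T, Delta_rel Delta[f]) g) for f : sigma -> sigma' *)
Inductive colim_step n (T : nrelposet n) (X : msset n) :
  colim_el T X -> colim_el T X -> Prop :=
| CStep (d d' : mdim n) (x' : X d') (f : dhom d d') (g : relfun T (simp d)) :
    colim_step
      (existT (fun s : relobj X => relfun T (simp (projT1 s)))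
         (existT _ d (act X f x')) g)
      (existT (fun s : relobj X => relfun T (simp (projT1 s)))
         (existT _ d' x') (relfun_post (simp_map f) g)).

Definition colim_canon n (T : nrelposet n) (X : msset n) (e : colim_el T X)
  : relfun T X :=
  relfun_post (yoneda (projT2 (projT1 e))) (projT2 e).

(** A functor [g : T -> Delta_rel X] sends the terminal object [t] of [T] to a
    simplex [x : X_d], and the structure maps [g a -> g t] exhibit every [g a]
    as a face of [x].  Hence [g] factors canonically through
    [Delta_rel Delta[d] -> Delta_rel X], which gives surjectivity.  For an
    arbitrary representative [(y, g')] of the colimit, [g'] itself factors
    through the simplex [g' t] of [Delta[d']]; this single generating step
    links [(y, g')] to the canonical factorisation of its image, so two
    representatives with the same image are related. *)
From HB Require Import structures.
From mathcomp Require Import all_boot.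
From Stdlib Require Import Relation_Operators.
From Stdlib Require Import FunctionalExtensionality ProofIrrelevance.

Set Implicit Arguments.
Unset Strict Implicit.

(* The components of a map of [Delta[-]] extended by [0] to all of [nat], so
   that maps with only propositionally equal sources can be compared. *)
Definition dhom_natfun n (d d' : mdim n) (f : dhom d d') (k : 'I_n.+1) (m : nat)
  : nat :=
  if (insub m : option 'I_(tnth d k).+1) is Some i then val (proj1_sig f k i)
  else 0.

Lemma dhom_natfun_ord n (d d' : mdim n) (f : dhom d d') k
    (i : 'I_(tnth d k).+1) :
  dhom_natfun f k (val i) = val (proj1_sig f k i).
Proof. by rewrite /dhom_natfun valK. Qed.

Lemma relfun_eq n (T : nrelposet n) (Y : msset n) (g1 g2 : relfun T Y) :
  (forall a, fob g1 a = fob g2 a) ->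
  (forall a b (h : ple a b) k m,
      dhom_natfun (proj1_sig (fmor g1 h)) k m =
      dhom_natfun (proj1_sig (fmor g2 h)) k m) ->
  g1 = g2.
Proof.
case: g1 g2 => [f1 m1 i1 c1 v1 w1] [f2 m2 i2 c2 v2 w2] /= eq_ob eq_mor.
have {eq_ob} eq_f : f1 = f2 by apply: functional_extensionality.
subst f2.
have eq_m : m1 = m2.
  do 3![apply: functional_extensionality_dep => ?].
  apply: relhom_eq; apply: dhom_eq.
  apply: functional_extensionality_dep => k; apply: functional_extensionality => i.
  by apply: val_inj; rewrite -!dhom_natfun_ord eq_mor.
subst m2; congr RelFun; exact: proof_irrelevance.
Qed.

Section FactorThroughTop.
Variables (n : nat) (T : nrelposet n) (X : msset n) (t : T)
  (le_t : forall a : T, ple a t).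

Section Factor.
Variable g : relfun T X.

Let top_dim := projT1 (fob g t).

Definition top_ob (a : T) : relobj (simp top_dim) :=
  existT _ (projT1 (fob g a)) (proj1_sig (fmor g (le_t a))).

Lemma top_mor_proof a b (h : ple a b) :
  act (simp top_dim) (proj1_sig (fmor g h)) (projT2 (top_ob b)) =
  projT2 (top_ob a).
Proof. by rewrite /= (fmor_comp g h (le_t b) (le_t a)). Qed.

Definition top_mor a b (h : ple a b) : relhom (top_ob a) (top_ob b) :=
  exist _ (proj1_sig (fmor g h)) (top_mor_proof h).

Lemma top_mor_id (a : T) (h : ple a a) : top_mor h = relid (top_ob a).
Proof. by apply: relhom_eq; rewrite /= (fmor_id g h). Qed.

Lemma top_mor_comp (a b c : T) (h1 : ple a b) (h2 : ple b c) (h3 : ple a c) :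
  top_mor h3 = relcomp (top_mor h2) (top_mor h1).
Proof. by apply: relhom_eq; rewrite /= (fmor_comp g h1 h2 h3). Qed.

Definition factor_top : relfun T (simp top_dim) :=
  @RelFun n T _ top_ob top_mor top_mor_id top_mor_comp
    (fun i a b h => @fmor_v n T X g i a b h) (fun a b h => @fmor_w n T X g a b h).

Definition colim_top : colim_el T X :=
  existT (fun s : relobj X => relfun T (simp (projT1 s))) (fob g t) factor_top.

Lemma colim_canon_top : colim_canon colim_top = g.
Proof.
apply: relfun_eq => [a|//] /=.
by rewrite /relmapF /= (proj2_sig (fmor g (le_t a))); case: (fob g a).
Qed.

End Factor.

Lemma colim_top_canon (e : colim_el T X) :
  clos_refl_sym_trans _ (@colim_step n T X) (colim_top (colim_canon e)) e.
Proof.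
case: e => [[d x] g]; apply: rst_step.
set e : colim_el T X := existT _ (existT _ d x) g.
have factor_g : g = relfun_post (simp_map (projT2 (fob g t)))
                      (factor_top (colim_canon e)).
  apply: relfun_eq => [a|//] /=.
  by rewrite /relmapF /=; have /= -> := proj2_sig (fmor g (le_t a)); case: (fob g a).
rewrite {2}/e {1}factor_g; exact: (CStep x (projT2 (fob g t))).
Qed.

End FactorThroughTop.

Lemma colim_step_canon n (T : nrelposet n) (X : msset n) (e1 e2 : colim_el T X) :
  colim_step e1 e2 -> colim_canon e1 = colim_canon e2.
Proof.
case=> d d' x' f g; apply: relfun_eq => [a|//] /=.
by rewrite /relmapF /= act_comp.
Qed.

Theorem proposition6p2 (n : nat) (hn : (1 <= n)%N) (T : nrelposet n)
  (hterm : exists t : T, forall a : T, ple a t) (X : msset n) :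
  (forall g : relfun T X, exists e : colim_el T X, colim_canon e = g) /\
  (forall e1 e2 : colim_el T X,
      colim_canon e1 = colim_canon e2 <->
      clos_refl_sym_trans _ (@colim_step n T X) e1 e2).
Proof.
have [t le_t] := hterm; split=> [g | e1 e2].
  by exists (colim_top le_t g); apply: colim_canon_top.
split=> [eq_canon | ].
  apply: rst_trans (colim_top_canon le_t e2).
  by rewrite -eq_canon; apply: rst_sym; apply: colim_top_canon.
elim=> [? ? /colim_step_canon | | ? ? _ -> | ? ? ? _ -> _ ->] //.
Qed.
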